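(* Let $D$ be an integral domain with quotient field $K$, $n\ge1$, and $f\in(T_n(K))[x]$. Then $f(C)\in T_n(D)$ for all $C\in T_n(D)$ if and only if $f_{ij}\in\mathrm{Int}_K(T_{n-j+1}(D))$ for all $1\le i\le j\le n$; and $f(C)_\ell\in T_n(D)$ for all $C\in T_n(D)$ if and only if $f_{ij}\in\mathrm{Int}_K(T_i(D))$ for all $1\le i\le j\le n$. Equivalently, under the identification of $(T_n(K))[x]$ with $T_n(K[x])$ via $f\mapsto(f_{ij})$, $\mathrm{Int}_{T_n(K)}(T_n(D))$ is the set of upper triangular matrices whose $(i,j)$-entry ($i\le j$) lies in $\mathrm{Int}_K(T_{n-j+1}(D))$, and $\mathrm{Int}^{\ell}_{T_n(K)}(T_n(D))$ is the set of upper triangular matrices whose $(i,j)$-entry ($i\le j$) lies in $\mathrm{Int}_K(T_i(D))$.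
   Context: $T_n(A)$ denotes the ring of upper triangular $n\times n$ matrices over a ring $A$. For $f=\sum_k F_kx^k\in(T_n(K))[x]$ with $F_k\in T_n(K)$, right substitution is $f(C)=\sum_kF_kC^k$ and left substitution is $f(C)_\ell=\sum_kC^kF_k$. Writing $f_{ij}^{(k)}$ for the $(i,j)$-entry of $F_k$, set $f_{ij}=\sum_k f_{ij}^{(k)}x^k\in K[x]$; the map $f\mapsto(f_{ij})$ is a ring isomorphism $(T_n(K))[x]\to T_n(K[x])$. For $m\ge1$, $\mathrm{Int}_K(T_m(D))=\{g\in K[x]\mid\forall C\in T_m(D):\ g(C)\in T_m(D)\}$ (usual evaluation). $\mathrm{Int}_{T_n(K)}(T_n(D))=\{f\in(T_n(K))[x]\mid\forall C\in T_n(D):\ f(C)\in T_n(D)\}$ and $\mathrm{Int}^{\ell}_{T_n(K)}(T_n(D))=\{f\in(T_n(K))[x]\mid\forall C\in T_n(D):\ f(C)_\ell\in T_n(D)\}$. *)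

From HB Require Import structures.
From mathcomp Require Import all_boot all_order all_algebra.
Set Implicit Arguments. Unset Strict Implicit. Unset Printing Implicit Defensive.
Import Order.TTheory GRing.Theory Num.Theory.
Local Open Scope ring_scope.

Definition inD (D : idomainType) (x : {fraction D}) : Prop :=
  exists d : D, x = FracField.tofrac d.

Definition upper_tri (R : pzRingType) (m : nat) (A : 'M[R]_m) : Prop :=
  forall i j : 'I_m, (j < i)%N -> A i j = 0.

Definition inTD (D : idomainType) (m : nat) (A : 'M[{fraction D}]_m) : Prop :=
  upper_tri A /\ forall i j, inD (A i j).

Definition peval_mx (K : fieldType) (m : nat) (g : {poly K}) (C : 'M[K]_m)
  : 'M[K]_m := \sum_(k < size g) g`_k *: C ^+ k.

Definition IntK (D : idomainType) (m : nat) (g : {poly {fraction D}}) : Prop :=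
  forall C : 'M[{fraction D}]_m, inTD C -> inTD (peval_mx g C).

Definition rsubst (R : nzRingType) (f : {poly R}) (C : R) : R :=
  \sum_(k < size f) f`_k * C ^+ k.

Definition lsubst (R : nzRingType) (f : {poly R}) (C : R) : R :=
  \sum_(k < size f) C ^+ k * f`_k.

Definition entry_poly (K : fieldType) (n : nat) (f : {poly 'M[K]_n.+1})
  (i j : 'I_n.+1) : {poly K} :=
  \poly_(k < size f) (f`_k i j).

From HB Require Import structures.
From mathcomp Require Import all_boot all_order all_algebra.
Import GRing.Theory.
Local Open Scope ring_scope.
Set Implicit Arguments. Unset Strict Implicit. Unset Printing Implicit Defensive.

(* For upper triangular matrices, the entries of a product in rows and columns
   s, ..., s + w - 1 only involve the diagonal block of the factors there, so
   entry (h, y) of g(C) is an entry of g applied to the lower right block of C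
   starting at h.  As f(C)_ij = sum_h f_ih(C)_hj, integrality of each f_ih on
   T_(n-h+1)(D) makes f(C) integral.  Conversely, a test matrix B placed as the
   diagonal block of C at position j exposes row 0 of f_ij(B) in row i of f(C),
   up to terms that are integral by downward induction on j; row 0 suffices
   because every entry of g(B) is a row-0 entry of g applied to a shifted
   block of B.  Left substitution reduces to right substitution through the
   transposition along the anti-diagonal, which reverses products, preserves
   T_n(D) and sends the entry (i, j) to (n+1-j, n+1-i). *)

Lemma sum_ord_shift (V : nmodType) m s w (F : nat -> V) :
    (forall z, [|| (z < s)%N, (s + w <= z)%N | (m <= z)%N] -> F z = 0) ->
  \sum_(z < m) F z = \sum_(e < w) F (s + e).
Proof.
move=> F0; pose N := (m + (s + w))%N.
have widen k : (k <= N)%N -> (forall z, (k <= z)%N -> F z = 0) ->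
    \sum_(z < k) F z = \sum_(z < N) F z.
  move=> kN Fk; rewrite (big_ord_widen _ _ kN) big_mkcond; apply: eq_bigr => z _.
  by case: ltnP => // /Fk ->.
rewrite widen ?leq_addr // => [|z mz]; last by rewrite F0 // mz !orbT.
have -> : \sum_(e < w) F (s + e) = \sum_(z < s + w) F z.
  have -> : \sum_(z < s + w) F z = \sum_(z < s + w | true && (s <= z)%N) F z.
    rewrite [RHS]big_mkcond; apply: eq_bigr => z _ /=.
    by case: leqP => // zs; rewrite F0 ?zs.
  rewrite -(big_geq_mkord _ _ xpredT) -{2}[s]add0n big_addn addKn big_mkord.
  by apply: eq_bigr => e _; rewrite addnC.
by rewrite widen ?leq_addl // => z wz; rewrite F0 // wz orbT.
Qed.

Section UpperTriangular.
Variables (R : pzRingType) (p : nat).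
Implicit Types A B : 'M[R]_p.

Lemma upper_tri0 : upper_tri (0 : 'M[R]_p).
Proof. by move=> i j _; rewrite mxE. Qed.

Lemma upper_tri1 : upper_tri (1 : 'M[R]_p).
Proof. by move=> i j ji; rewrite mxE -val_eqE /= gtn_eqF. Qed.

Lemma upper_triD A B : upper_tri A -> upper_tri B -> upper_tri (A + B).
Proof. by move=> uA uB i j ji; rewrite mxE uA // uB // addr0. Qed.

Lemma upper_triZ a A : upper_tri A -> upper_tri (a *: A).
Proof. by move=> uA i j ji; rewrite mxE uA // mulr0. Qed.

Lemma upper_tri_sum I (r : seq I) (F : I -> 'M[R]_p) :
  (forall k, upper_tri (F k)) -> upper_tri (\sum_(k <- r) F k).
Proof.
by move=> uF; apply: (big_ind (@upper_tri R p)) => //; [exact: upper_tri0 | exact: upper_triD].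
Qed.

Lemma upper_triM A B : upper_tri A -> upper_tri B -> upper_tri (A * B).
Proof.
move=> uA uB i j ji; rewrite -mulmxE mxE big1 // => z _.
have [zi | iz] := ltnP z i; first by rewrite uA ?mul0r.
by rewrite uB ?mulr0 // (leq_trans ji iz).
Qed.

Lemma upper_triX A k : upper_tri A -> upper_tri (A ^+ k).
Proof.
move=> uA; elim: k => [|k IH]; first exact: upper_tri1.
by rewrite exprS; apply: upper_triM.
Qed.

End UpperTriangular.

Section Windows.
Variable R : pzRingType.
Implicit Types p w : nat.

Definition xentry p (A : 'M[R]_p) (x y : nat) : R :=
  if (insub x : option 'I_p) is Some i then
    if (insub y : option 'I_p) is Some j then A i j else 0 else 0.

Lemma xentryE p (A : 'M[R]_p) (i j : 'I_p) : xentry A i j = A i j.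
Proof. by rewrite /xentry !valK. Qed.

Lemma xentry_oob p (A : 'M[R]_p) x y : (p <= x)%N || (p <= y)%N -> xentry A x y = 0.
Proof.
rewrite /xentry; case/orP => [px | py]; first by rewrite insubF // ltnNge px.
by case: insub => // i; rewrite insubF // ltnNge py.
Qed.

Lemma xentry_lt p (A : 'M[R]_p) x y : upper_tri A -> (y < x)%N -> xentry A x y = 0.
Proof.
move=> uA yx; have [xp | px] := ltnP x p; last by rewrite xentry_oob ?px.
have yp := ltn_trans yx xp.
by rewrite -[x]/(val (Ordinal xp)) -[y]/(val (Ordinal yp)) xentryE uA.
Qed.

Lemma xentry1 p x y : (x < p)%N -> (y < p)%N -> xentry (1 : 'M[R]_p) x y = (x == y)%:R.
Proof.
by move=> xp yp; rewrite -[x]/(val (Ordinal xp)) -[y]/(val (Ordinal yp)) xentryE mxE.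
Qed.

Lemma xentry_mul p (A B : 'M[R]_p) x y :
  xentry (A * B) x y = \sum_(z < p) xentry A x z * xentry B z y.
Proof.
have [xp | px] := ltnP x p; last first.
  by rewrite xentry_oob ?px // big1 // => z _; rewrite xentry_oob ?px ?mul0r.
have [yp | py] := ltnP y p; last first.
  by rewrite xentry_oob ?py ?orbT // big1 // => z _; rewrite (xentry_oob B) ?py ?orbT ?mulr0.
rewrite -[x]/(val (Ordinal xp)) -[y]/(val (Ordinal yp)) xentryE -mulmxE mxE.
by apply: eq_bigr => z _; rewrite !xentryE.
Qed.

Lemma xentry_sum p I (r : seq I) (F : I -> 'M[R]_p) x y :
  xentry (\sum_(k <- r) F k) x y = \sum_(k <- r) xentry (F k) x y.
Proof.
rewrite /xentry; case: insub => [i|]; last by rewrite big1.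
by case: insub => [j|]; [rewrite summxE | rewrite big1].
Qed.

Lemma xentryZ p a (A : 'M[R]_p) x y : xentry (a *: A) x y = a * xentry A x y.
Proof.
by rewrite /xentry; case: insub => [i|]; [case: insub => [j|]; rewrite ?mxE | ]; rewrite ?mulr0.
Qed.

Definition window s w p (A : 'M[R]_p) : 'M[R]_w :=
  \matrix_(c, d) xentry A (s + c) (s + d).

Definition embed s p w (B : 'M[R]_w) : 'M[R]_p :=
  \matrix_(x, y) if (s <= x)%N && (s <= y)%N then xentry B (x - s) (y - s) else 0.

Lemma upper_tri_window s w p (A : 'M[R]_p) : upper_tri A -> upper_tri (window s w A).
Proof. by move=> uA c d dc; rewrite mxE xentry_lt // ltn_add2l. Qed.

Lemma upper_tri_embed s p w (B : 'M[R]_w) : upper_tri B -> upper_tri (embed s p B).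
Proof.
move=> uB x y yx; rewrite mxE; case: ifP => // /andP[sx sy].
by rewrite xentry_lt // ltn_sub2rE.
Qed.

Lemma windowM s w p (A B : 'M[R]_p) : upper_tri A -> upper_tri B ->
  window s w (A * B) = window s w A * window s w B.
Proof.
move=> uA uB; apply/matrixP => c d; rewrite -mulmxE !mxE xentry_mul.
rewrite (@sum_ord_shift _ p s w (fun z => xentry A (s + c) z * xentry B z (s + d))) => [|z].
  by apply: eq_bigr => e _; rewrite !mxE.
case/or3P => [zs | wz | pz]; last by rewrite xentry_oob ?pz ?orbT ?mul0r.
  by rewrite xentry_lt ?mul0r // (leq_trans zs) ?leq_addr.
by rewrite (@xentry_lt _ B) ?mulr0 // (leq_trans _ wz) // ltn_add2l.
Qed.

Lemma window1 s w p : (s + w <= p)%N -> window s w (1 : 'M[R]_p) = 1.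
Proof.
move=> swp; apply/matrixP => c d; have lt_p (e : 'I_w) : (s + e < p)%N.
  by apply: leq_trans swp; rewrite ltn_add2l.
by rewrite !mxE xentry1 // eqn_add2l.
Qed.

Lemma windowX s w p (A : 'M[R]_p) k : upper_tri A -> (s + w <= p)%N ->
  window s w (A ^+ k) = window s w A ^+ k.
Proof.
move=> uA swp; elim: k => [|k IH]; first exact: window1.
by rewrite !exprS windowM ?IH //; apply: upper_triX.
Qed.

Lemma window_embed s w p (B : 'M[R]_w) : (s + w <= p)%N -> window s w (embed s p B) = B.
Proof.
move=> swp; apply/matrixP => c d; have lt_p (e : 'I_w) : (s + e < p)%N.
  by apply: leq_trans swp; rewrite ltn_add2l.
rewrite mxE -[(s + c)%N]/(val (Ordinal (lt_p c))) -[(s + d)%N]/(val (Ordinal (lt_p d))).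
by rewrite xentryE mxE /= !leq_addr /= !addKn xentryE.
Qed.

Lemma xentry_window s w p (A : 'M[R]_p) x y : (x < w)%N -> (y < w)%N ->
  xentry (window s w A) x y = xentry A (s + x) (s + y).
Proof.
by move=> xw yw; rewrite -[x]/(val (Ordinal xw)) -[y]/(val (Ordinal yw)) xentryE mxE.
Qed.

End Windows.

Section Evaluation.
Variables (K : fieldType) (p : nat).
Implicit Types (g : {poly K}) (A : 'M[K]_p).

Lemma upper_tri_peval g A : upper_tri A -> upper_tri (peval_mx g A).
Proof. by move=> uA; apply: upper_tri_sum => k; apply/upper_triZ/upper_triX. Qed.

Lemma window_peval s w g A : upper_tri A -> (s + w <= p)%N ->
  window s w (peval_mx g A) = peval_mx g (window s w A).
Proof.
move=> uA swp; apply/matrixP => c d; rewrite mxE xentry_sum summxE.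
by apply: eq_bigr => k _; rewrite xentryZ -windowX // !mxE.
Qed.

Lemma peval_row0 g A (x y : 'I_p) : (forall z, A x z = 0) -> x != y ->
  peval_mx g A x y = 0.
Proof.
move=> Ax0 xy; rewrite summxE big1 // => -[k kp] _; rewrite mxE /=.
case: k kp => [|k] _; first by rewrite mxE (negbTE xy) mulr0.
by rewrite exprS -mulmxE mxE big1 ?mulr0 // => z _; rewrite Ax0 mul0r.
Qed.

Lemma peval_mx0 A : peval_mx 0 A = 0.
Proof. by rewrite /peval_mx size_poly0 big_ord0. Qed.

End Evaluation.

Section Integrality.
Variable D : idomainType.
Local Notation K := {fraction D}.

Lemma inD0 : inD (0 : K).
Proof. by exists 0; rewrite tofrac0. Qed.

Lemma inDD (x y : K) : inD x -> inD y -> inD (x + y).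
Proof. by move=> [a ->] [b ->]; exists (a + b); rewrite tofracD. Qed.

Lemma inDB (x y : K) : inD x -> inD y -> inD (x - y).
Proof. by move=> [a ->] [b ->]; exists (a - b); rewrite tofracB. Qed.

Lemma inD_sum I (r : seq I) (P : pred I) (F : I -> K) :
  (forall i, P i -> inD (F i)) -> inD (\sum_(i <- r | P i) F i).
Proof. by move=> DF; apply: big_ind => //; [exact: inD0 | exact: inDD]. Qed.

Lemma inD_xentry p (C : 'M[K]_p) x y : inTD C -> inD (xentry C x y).
Proof.
move=> [_ DC]; have [xp | px] := ltnP x p; last by rewrite xentry_oob ?px //; apply: inD0.
have [yp | py] := ltnP y p; last by rewrite xentry_oob ?py ?orbT //; apply: inD0.
by rewrite -[x]/(val (Ordinal xp)) -[y]/(val (Ordinal yp)) xentryE.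
Qed.

Lemma inTD_window s w p (C : 'M[K]_p) : inTD C -> inTD (window s w C).
Proof.
move=> DC; split=> [|c d]; first exact/upper_tri_window/DC.1.
by rewrite mxE; apply: inD_xentry.
Qed.

Lemma inTD_embed s p w (B : 'M[K]_w) : inTD B -> inTD (embed s p B).
Proof.
move=> DB; split=> [|x y]; first exact/upper_tri_embed/DB.1.
by rewrite mxE; case: ifP => _; [apply: inD_xentry | apply: inD0].
Qed.

Lemma peval_row_inD p (C : 'M[K]_p) g (h y : 'I_p) :
  inTD C -> IntK (p - h) g -> inD (peval_mx g C h y).
Proof.
move=> DC Dg; have uC := DC.1; have [yh | hy] := ltnP y h.
  by rewrite upper_tri_peval //; apply: inD0.
have -> : peval_mx g C h y = xentry (peval_mx g C) (h + 0) (h + (y - h)).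
  by rewrite addn0 subnKC // xentryE.
rewrite -(@xentry_window _ h (p - h)) ?subn_gt0 ?ltn_sub2r //.
have hp : (h + (p - h) <= p)%N by rewrite subnKC // ltnW.
by rewrite window_peval //; apply/inD_xentry/Dg/inTD_window.
Qed.

Lemma IntK_row0 m g :
    (forall B : 'M[K]_m, inTD B -> forall y, inD (xentry (peval_mx g B) 0%N y)) ->
  IntK m g.
Proof.
move=> Dg B DB; have uB := DB.1; split=> [|a b]; first exact: upper_tri_peval.
have [ba | ab] := ltnP b a; first by rewrite upper_tri_peval //; apply: inD0.
pose w := (m - a)%N; have aw : (a + w <= m)%N by rewrite subnKC // ltnW.
have -> : peval_mx g B a b = xentry (peval_mx g B) (a + 0) (a + (b - a)).
  by rewrite addn0 subnKC // xentryE.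
rewrite -(@xentry_window _ a w) ?subn_gt0 ?ltn_sub2r // window_peval //.
rewrite -[X in peval_mx g X](@window_embed _ 0 w m) ?leq_subr //.
rewrite -window_peval ?leq_subr //; last exact/upper_tri_embed/upper_tri_window.
rewrite xentry_window ?subn_gt0 ?ltn_sub2r //.
exact/Dg/inTD_embed/inTD_window.
Qed.

End Integrality.

Section Substitution.
Variables (K : fieldType) (n : nat).
Implicit Types (f : {poly 'M[K]_n.+1}) (C : 'M[K]_n.+1).

Lemma peval_mx_widen (g : {poly K}) C m :
  (size g <= m)%N -> peval_mx g C = \sum_(k < m) g`_k *: C ^+ k.
Proof.
move=> gm; rewrite /peval_mx (big_ord_widen _ (fun k => g`_k *: C ^+ k) gm) big_mkcond.
by apply: eq_bigr => k _; case: ltnP => // /(nth_default 0) ->; rewrite scale0r.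
Qed.

Lemma rsubst_entry f C i j :
  rsubst f C i j = \sum_(h < n.+1) peval_mx (entry_poly f i h) C h j.
Proof.
rewrite /rsubst summxE.
under [RHS]eq_bigr => h _ do rewrite (peval_mx_widen _ (size_poly _ _)) summxE.
rewrite exchange_big; apply: eq_bigr => k _; rewrite -mulmxE mxE.
by apply: eq_bigr => h _; rewrite mxE coef_poly ltn_ord.
Qed.

Lemma upper_tri_rsubst f C :
  (forall k, upper_tri f`_k) -> upper_tri C -> upper_tri (rsubst f C).
Proof. by move=> uf uC; apply: upper_tri_sum => k; apply/upper_triM/upper_triX. Qed.

Lemma entry_poly_lt f (i h : 'I_n.+1) :
  (forall k, upper_tri f`_k) -> (h < i)%N -> entry_poly f i h = 0.
Proof.
move=> uf hi; apply/polyP => k; rewrite coef_poly coef0.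
by case: ifP => // _; apply: uf.
Qed.

End Substitution.

Section RightSubstitution.
Variables (D : idomainType) (n : nat) (f : {poly 'M[{fraction D}]_n.+1}).
Hypothesis uf : forall k, upper_tri f`_k.

Lemma inTD_rsubst :
    (forall i j : 'I_n.+1, (i <= j)%N -> IntK (n.+1 - j) (entry_poly f i j)) ->
  forall C, inTD C -> inTD (rsubst f C).
Proof.
move=> Df C DC; split=> [|i j]; first exact: upper_tri_rsubst DC.1.
rewrite rsubst_entry; apply: inD_sum => h _.
have [hi | ih] := ltnP h i; first by rewrite entry_poly_lt // peval_mx0 mxE; apply: inD0.
by apply: peval_row_inD => //; apply: Df.
Qed.

Lemma IntK_entry_poly_step (j : 'I_n.+1) :
    (forall C, inTD C -> inTD (rsubst f C)) ->
    (forall h : 'I_n.+1, (j < h)%N ->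
       forall i : 'I_n.+1, (i <= h)%N -> IntK (n.+1 - h) (entry_poly f i h)) ->
  forall i : 'I_n.+1, (i <= j)%N -> IntK (n.+1 - j) (entry_poly f i j).
Proof.
move=> Df IH i ij; apply: IntK_row0 => B DB y.
have [my | ym] := leqP (n.+1 - j) y; first by rewrite xentry_oob ?my ?orbT //; apply: inD0.
have jm : (j + (n.+1 - j) <= n.+1)%N by rewrite subnKC // ltnW.
have jy : (j + y < n.+1)%N by rewrite -ltn_subRL.
pose C : 'M_n.+1 := embed j n.+1 B; pose t := Ordinal jy.
have DC : inTD C := inTD_embed _ _ DB.
have -> : xentry (peval_mx (entry_poly f i j) B) 0%N y = peval_mx (entry_poly f i j) C j t.
  rewrite -[X in peval_mx _ X](@window_embed _ j _ n.+1) // -window_peval //; last exact: DC.1.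
  by rewrite xentry_window ?subn_gt0 // addn0 -[(j + y)%N]/(nat_of_ord t) xentryE.
have := (Df C DC).2 i t; rewrite rsubst_entry (bigD1 j) //=.
suff Drest : inD (\sum_(h < n.+1 | h != j) peval_mx (entry_poly f i h) C h t).
  by move/inDB/(_ Drest); rewrite addrK.
apply: inD_sum => h hj; have [hj' | jh] := ltnP h j.
  rewrite peval_row0; first exact: inD0.
    by move=> z; rewrite mxE leqNgt hj'.
  by rewrite -val_eqE /= neq_ltn (leq_trans hj') ?leq_addr.
by apply/peval_row_inD/IH/(leq_trans ij) => //; rewrite ltn_neqAle eq_sym hj.
Qed.

Lemma IntK_entry_poly :
    (forall C, inTD C -> inTD (rsubst f C)) ->
  forall i j : 'I_n.+1, (i <= j)%N -> IntK (n.+1 - j) (entry_poly f i j).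
Proof.
move=> Df; suff IH k (j : 'I_n.+1) : (n - j)%N = k ->
    forall i : 'I_n.+1, (i <= j)%N -> IntK (n.+1 - j) (entry_poly f i j).
  by move=> i j; apply: IH.
elim/ltn_ind: k j => k IH j jk; apply: IntK_entry_poly_step => // h jh.
by apply: (IH (n - h)%N) => //; rewrite -jk ltn_sub2l // (leq_trans jh (ltn_ord h)).
Qed.

Lemma rsubst_integralP :
  (forall C, inTD C -> inTD (rsubst f C)) <->
  (forall i j : 'I_n.+1, (i <= j)%N -> IntK (n.+1 - j) (entry_poly f i j)).
Proof. by split; [exact: IntK_entry_poly | exact: inTD_rsubst]. Qed.

End RightSubstitution.

Section Reversal.
Variables (R : comPzRingType) (p : nat).
Implicit Types A B : 'M[R]_p.

Definition mxrev A : 'M[R]_p := \matrix_(i, j) A (rev_ord j) (rev_ord i).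

Lemma mxrevK : involutive mxrev.
Proof. by move=> A; apply/matrixP => i j; rewrite !mxE !rev_ordK. Qed.

Lemma mxrev_inj : injective mxrev.
Proof. exact: inv_inj mxrevK. Qed.

Lemma mxrev0 : mxrev 0 = 0.
Proof. by apply/matrixP => i j; rewrite !mxE. Qed.

Lemma mxrev1 : mxrev 1 = 1.
Proof. by apply/matrixP => i j; rewrite !mxE (inj_eq rev_ord_inj) eq_sym. Qed.

Lemma mxrevM A B : mxrev (A * B) = mxrev B * mxrev A.
Proof.
apply/matrixP => i j; rewrite -!mulmxE !mxE [RHS](reindex_inj rev_ord_inj) /=.
by apply: eq_bigr => z _; rewrite !mxE rev_ordK mulrC.
Qed.

Lemma mxrevX A k : mxrev (A ^+ k) = mxrev A ^+ k.
Proof.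
elim: k => [|k IH]; first exact: mxrev1.
by rewrite exprS mxrevM IH -exprSr.
Qed.

Lemma mxrev_sum I (r : seq I) (F : I -> 'M[R]_p) :
  mxrev (\sum_(k <- r) F k) = \sum_(k <- r) mxrev (F k).
Proof.
by apply/matrixP => i j; rewrite mxE !summxE; apply: eq_bigr => k _; rewrite mxE.
Qed.

Lemma upper_tri_mxrev A : upper_tri A -> upper_tri (mxrev A).
Proof.
move=> uA i j ji; rewrite mxE uA //= ltn_sub2l //.
exact: leq_ltn_trans ji (ltn_ord i).
Qed.

End Reversal.
Arguments mxrev {R p}.

Lemma inTD_mxrev (D : idomainType) p (C : 'M[{fraction D}]_p) : inTD C -> inTD (mxrev C).
Proof. by move=> [uC DC]; split=> [|i j]; [apply: upper_tri_mxrev | rewrite mxE]. Qed.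

Section LeftSubstitution.
Variables (K : fieldType) (n : nat).
Implicit Types (f : {poly 'M[K]_n.+1}) (C : 'M[K]_n.+1).

Lemma lsubst_mxrev f C : lsubst f C = mxrev (rsubst (map_poly mxrev f) (mxrev C)).
Proof.
rewrite /rsubst size_map_inj_poly ?mxrev0 //; last exact: mxrev_inj.
rewrite mxrev_sum; apply: eq_bigr => k _.
by rewrite coef_map_id0 ?mxrev0 // -mxrevX -mxrevM mxrevK.
Qed.

Lemma entry_poly_mxrev f i j :
  entry_poly (map_poly mxrev f) i j = entry_poly f (rev_ord j) (rev_ord i).
Proof.
apply/polyP => k; rewrite !coef_poly size_map_inj_poly ?mxrev0 //; last exact: mxrev_inj.
by case: ltnP => // _; rewrite mxE.
Qed.

End LeftSubstitution.

Lemma lsubst_integralP (D : idomainType) n (f : {poly 'M[{fraction D}]_n.+1}) :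
    (forall k, upper_tri f`_k) ->
  (forall C, inTD C -> inTD (lsubst f C)) <->
  (forall i j : 'I_n.+1, (i <= j)%N -> IntK i.+1 (entry_poly f i j)).
Proof.
move=> uf; pose f' := map_poly mxrev f.
have uf' k : upper_tri f'`_k by rewrite coef_map_id0 ?mxrev0 //; apply: upper_tri_mxrev.
have rev_le (i j : 'I_n.+1) : (rev_ord j <= rev_ord i)%N = (i <= j)%N.
  by rewrite /= leq_sub2lE.
have rev_size (i : 'I_n.+1) : (n.+1 - i)%N = (rev_ord i).+1.
  by rewrite /= subSS subSn // -ltnS.
apply: (@iff_trans _ (forall C, inTD C -> inTD (rsubst f' C))).
  split=> Df C DC; last by rewrite lsubst_mxrev; apply/inTD_mxrev/Df/inTD_mxrev.
  by rewrite -[C]mxrevK -[rsubst _ _]mxrevK -lsubst_mxrev; apply/inTD_mxrev/Df/inTD_mxrev.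
apply: (iff_trans (rsubst_integralP uf')); split=> Df i j ij.
  have := Df (rev_ord j) (rev_ord i).
  by rewrite /f' entry_poly_mxrev rev_size !rev_ordK rev_le; apply.
by rewrite /f' entry_poly_mxrev rev_size; apply: Df; rewrite rev_le.
Qed.

Theorem corollary5p3 (D : idomainType) (n : nat)
  (f : {poly 'M[{fraction D}]_n.+1})
  (Hf : forall k : nat, upper_tri f`_k) :
  ((forall C : 'M[{fraction D}]_n.+1, inTD C -> inTD (rsubst f C)) <->
   (forall i j : 'I_n.+1, (i <= j)%N -> IntK (n.+1 - j) (entry_poly f i j)))
  /\
  ((forall C : 'M[{fraction D}]_n.+1, inTD C -> inTD (lsubst f C)) <->
   (forall i j : 'I_n.+1, (i <= j)%N -> IntK i.+1 (entry_poly f i j))).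
Proof. by split; [exact: rsubst_integralP | exact: lsubst_integralP]. Qed.
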